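(* Consider the system $\dot x(t) = f(x(t))$, $x(0)=x_0$, where $x\in\mathbb R^n$, $f:\mathbb R^n\to\mathbb R^n$ is continuous with $f(0)=0$, and solutions exist and are unique. Let $V:\mathbb R^n\to\mathbb R$ be a continuously differentiable, positive definite, proper function satisfying \[ \dot V(x) \leq -\alpha_1V(x)^{\gamma_1}-\alpha_2V(x)^{\gamma_2}+\delta_1V(x) \] for all $x\in\mathbb R^n\setminus\{0\}$ along the trajectories of the system, where $\alpha_1,\alpha_2>0$, $\delta_1\in\mathbb R$, $\gamma_1 = 1+\frac{1}{\mu}$, $\gamma_2 = 1-\frac{1}{\mu}$ for some $\mu>1$. Let $r\coloneqq \frac{\delta_1}{2\sqrt{\alpha_1\alpha_2}}$, let $0<k<1$, $k_1 = \sqrt{\frac{4\alpha_1\alpha_2-\delta_1^2}{4\alpha_1^2}}$ and $k_2 = -\frac{\delta_1}{\sqrt{4\alpha_1\alpha_2-\delta_1^2}}$. Then there exists a neighborhood $D\subseteq\mathbb R^n$ of the origin such that for all $x(0)\in D$, the trajectories satisfy $x(t)\in D$ for all $t\geq 0$ and reach the origin within a fixed time $T$, where \[ D = \begin{cases} \mathbb R^n, & r<1,\\[2pt] \left\{x \;\middle|\; V(x)\leq k^\mu\left(\frac{\delta_1-\sqrt{\delta_1^2-4\alpha_1\alpha_2}}{2\alpha_1}\right)^\mu\right\}, & r\geq 1,\end{cases} \] and \[ T\leq \begin{cases} \frac{\mu\pi}{2\sqrt{\alpha_1\alpha_2}}, & r\leq 0,\\[2pt] \frac{\mu}{\alpha_1k_1}\left(\frac{\pi}{2}-\tan^{-1}k_2\right),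 & 0\leq r<1,\\[2pt] \frac{\mu k}{(1-k)\sqrt{\alpha_1\alpha_2}}, & r\geq 1.\end{cases} \]
   Context: $\dot V(x)$ denotes the time derivative of $V$ along trajectories, i.e. $\frac{\partial V}{\partial x}(x) f(x)$. A function is proper here in the sense of radially unbounded (sublevel sets are compact). $\tan^{-1}$ is the principal inverse tangent. *)

From HB Require Import structures.
From mathcomp Require Import all_boot all_order all_algebra.
From mathcomp Require Import all_classical all_reals all_analysis.
Set Implicit Arguments. Unset Strict Implicit. Unset Printing Implicit Defensive.
Import Order.TTheory GRing.Theory Num.Theory.
Import numFieldNormedType.Exports.
Local Open Scope classical_set_scope.
Local Open Scope ring_scope.

(* V : R^n -> R is continuously differentiable: differentiable everywhere and
   the differential x |-> dV(x) is continuous (tested on each direction v,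
   which in finite dimension is continuity of the Jacobian). *)
Definition C1 {R : realType} {n : nat} (V : 'rV[R]_n -> R) : Prop :=
  (forall x, differentiable V x) /\ (forall v, continuous (fun x => 'd V x v)).

Definition positive_definite {R : realType} {n : nat} (V : 'rV[R]_n -> R) : Prop :=
  V 0 = 0 /\ forall x, x != 0 -> 0 < V x.

(* proper = radially unbounded: all sublevel sets compact *)
Definition proper_fun {R : realType} {n : nat} (V : 'rV[R]_n -> R) : Prop :=
  forall c : R, compact [set x | V x <= c].

Definition is_solution {R : realType} {n : nat} (f : 'rV[R]_n -> 'rV[R]_n)
  (x0 : 'rV[R]_n) (x : R -> 'rV[R]_n) : Prop :=
  x 0 = x0 /\ {within `[0, +oo[%classic, continuous x} /\
  forall t : R, 0 < t -> is_derive t 1 x (f (x t)).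

Definition settles_by {R : realType} {n : nat} (x : R -> 'rV[R]_n) (T : R) : Prop :=
  forall t, T <= t -> x t = 0.

From HB Require Import structures.
From mathcomp Require Import all_boot all_order all_algebra.
From mathcomp Require Import all_classical all_reals all_analysis.
From mathcomp Require Import ring lra.
Set Implicit Arguments. Unset Strict Implicit. Unset Printing Implicit Defensive.
Import Order.TTheory GRing.Theory Num.Theory.
Import numFieldNormedType.Exports.
Local Open Scope classical_set_scope.
Local Open Scope ring_scope.

(* Put w = V(x)^(1/mu).  The hypothesis on dV/dt says that, while w > 0,
   w' <= -(alpha1 w^2 - delta1 w + alpha2) / mu.  A primitive Phi of mu divided by this
   quadratic therefore decreases at least at unit rate along w.  If r < 1 the quadratic
   has no positive root and Phi is an arctangent, bounded above; if r >= 1 the sublevel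
   set D, on which w <= k w0 below the smaller root w0, is invariant and Phi = C / (w0 - w)
   is bounded there.  In both cases w must vanish before time sup Phi - Phi 0, whatever the
   initial condition, and then stays at 0 because V is nonincreasing. *)

Section RealComparison.
Context {R : realType}.
Implicit Types (h dh : R -> R) (b c m B T s t u : R).

Lemma derive_le0_nonincr h dh b :
  {within `[0, +oo[, continuous h} -> (forall t, 0 < t -> is_derive t 1 h (dh t)) ->
  (forall t, 0 < t < b -> dh t <= 0) -> {in `[0, b] &, {homo h : s t /~ s <= t}}.
Proof.
move=> hc hd dh_le0; apply: ler0_derive1_le_cc.
- by move=> t; rewrite in_itv /= => /andP[t0 _]; have [] := hd t t0.
- move=> t; rewrite in_itv /= => tb.
  by rewrite derive1E; have [_ ->] := hd t (andP tb).1; rewrite dh_le0.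
- apply: continuous_subspaceW hc => u /=; rewrite !in_itv /= andbT.
  by case/andP.
Qed.

Lemma fixed_time_bound h dh B T : 0 < T ->
  (forall t, 0 < t <= T -> is_derive t 1 h (dh t)) ->
  (forall t, 0 < t < T -> dh t <= -1) ->
  (forall t, 0 < t <= T -> h t <= B + T) -> h T <= B.
Proof.
move=> T_gt0 hd dh_le hB.
have hTB : h T <= B + T by apply: hB; rewrite T_gt0 lexx.
have decr : {in `]0, T] &, {homo h \+ id : s t /~ s <= t}}.
  have hd1 t : 0 < t < T -> is_derive t 1 (h \+ id) (dh t + 1).
    by case/andP=> t0 tT; apply: is_deriveD; apply: hd; rewrite t0 ltW.
  apply: ler0_derive1_le_oc.
  - by move=> t; rewrite in_itv /= => /hd1 [].
  - move=> t; rewrite in_itv /= => tT; rewrite derive1E.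
    by have [_ ->] := hd1 t tT; have := dh_le t tT; lra.
  - apply: continuous_in_subspaceT => t; rewrite inE /= in_itv /= => tT.
    apply: continuousD; last exact: cvg_id.
    by have [/derivable1_diffP/differentiable_continuous] := hd t tT.
apply/ler_addgt0Pr => e e_gt0; have [eT|Te] := leP e T; last by lra.
have := decr T e; rewrite !in_itv /= e_gt0 eT T_gt0 lexx => /(_ isT isT isT) /=.
by have := hB e; rewrite e_gt0 eT => /(_ isT); lra.
Qed.

Lemma first_hitting h a b m : a <= b -> {within `[a, b], continuous h} ->
  m <= h b -> exists2 s, s \in `[a, b] & m <= h s /\ forall u, a <= u < s -> h u < m.
Proof.
move=> ab hc mb.
pose A := h @^-1` [set y | m <= y] `&` `[a, b].
have A_compact : compact A.
  apply: (@subclosed_compact _ A `[a, b]); [|exact: segment_compact|by move=> ? []].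
  rewrite closed_setIS; last exact: interval_closed.
  by apply: preimage_closed => [u _|]; [exact: hc | exact: closed_ge].
have A_ne0 : A !=set0 by exists b; split => //=; rewrite in_itv /= ab lexx.
have id_cont : {within A, continuous (@id R)}.
  by apply: continuous_subspaceT => ?; exact: cvg_id.
have [s /set_mem[/= ms sab] s_min] := compact_EVT_min A_ne0 A_compact id_cont.
exists s => //; split => // u /andP[au us]; rewrite ltNge; apply/negP => m_le.
have /s_min : u \in A.
  by rewrite inE; split => //=; rewrite in_itv /= au (le_trans (ltW us)) ?(itvP sab).
by rewrite leNgt us.
Qed.

Lemma sublevel_invariant h dh c M :
  {within `[0, +oo[, continuous h} -> (forall t, 0 < t -> is_derive t 1 h (dh t)) ->
  (forall t, 0 < t -> h t < M -> dh t <= 0) ->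
  h 0 <= c -> c < M -> forall t, 0 <= t -> h t <= c.
Proof.
move=> hc hd dh_le0 h0c cM t t_ge0; rewrite leNgt; apply/negP => ct.
pose m := Num.min (h t) M.
have [s s0t [ms h_lt]] : exists2 s, s \in `[0, t] & m <= h s /\ forall u, 0 <= u < s -> h u < m.
  apply: first_hitting => //; last by rewrite ge_min lexx.
  apply: continuous_subspaceW hc => u /=; rewrite !in_itv /= andbT.
  by case/andP.
have hs0 : h s <= h 0.
  apply: (derive_le0_nonincr (b := s) hc hd) => //; rewrite ?in_itv /= ?lexx ?(itvP s0t) //.
  move=> u /andP[u0 us]; apply: dh_le0 => //.
  have := h_lt u; rewrite ltW // us => /(_ isT) hu.
  by apply: lt_le_trans hu _; rewrite ge_min lexx orbT.
have : c < m by rewrite lt_min ct cM.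
lra.
Qed.
End RealComparison.

Section Potential.
Context {R : realType}.
Implicit Types (v dv Q Phi dPhi : R -> R) (mu T t y : R).

Lemma powRV_derive_le (v dv Q mu : R) : 0 < v -> 0 < mu ->
  dv <= - v `^ (1 - mu^-1) * Q -> mu^-1 * v `^ (mu^-1 - 1) * dv <= - (Q / mu).
Proof.
move=> v_gt0 mu_gt0 dv_le.
have vK : v `^ (mu^-1 - 1) * v `^ (1 - mu^-1) = 1.
  rewrite -powRD; last by rewrite (gt_eqF v_gt0) implybT.
  have -> : mu^-1 - 1 + (1 - mu^-1) = 0 by ring.
  exact: powRr0.
have c_gt0 : 0 < mu^-1 * v `^ (mu^-1 - 1) by rewrite mulr_gt0 ?invr_gt0 ?powR_gt0.
apply: le_trans (ler_wpM2l (ltW c_gt0) dv_le) _.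
have -> : mu^-1 * v `^ (mu^-1 - 1) * (- v `^ (1 - mu^-1) * Q) =
  - (Q / mu) * (v `^ (mu^-1 - 1) * v `^ (1 - mu^-1)) by ring.
by rewrite vK mulr1.
Qed.

(* Phi o w decreases at unit rate but stays in (Phi 0, Phi 0 + T]: w cannot stay
   positive for longer than T, independently of v 0. *)
Lemma potential_settling v dv Q Phi dPhi (Y : set R) mu T : 0 < mu -> 0 < T ->
  (forall t, 0 < t -> is_derive t 1 v (dv t)) ->
  (forall t, 0 < t -> 0 < v t -> dv t <= - v t `^ (1 - mu^-1) * Q (v t `^ mu^-1)) ->
  (forall y, 0 < y -> Y y -> [/\ is_derive y 1 Phi (dPhi y), 0 <= dPhi y,
     mu <= dPhi y * Q y & Phi 0 < Phi y <= Phi 0 + T]) ->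
  (forall t, 0 < t <= T -> Y (v t `^ mu^-1)) ->
  ~ (forall t, 0 < t <= T -> 0 < v t).
Proof.
move=> mu_gt0 T_gt0 v_derive v_decay Phi_props w_Y v_gt0.
pose w t := v t `^ mu^-1.
have w_props t : 0 < t <= T -> [/\ is_derive (w t) 1 Phi (dPhi (w t)), 0 <= dPhi (w t),
    mu <= dPhi (w t) * Q (w t) & Phi 0 < Phi (w t) <= Phi 0 + T].
  by move=> tT; apply: Phi_props; [exact/powR_gt0/v_gt0 | exact: w_Y].
have w_derive t : 0 < t <= T -> is_derive t 1 w (mu^-1 * v t `^ (mu^-1 - 1) * dv t).
  move=> tT; exact: is_derive1_comp (is_derive1_powR mu^-1 (v_gt0 t tT)) (v_derive t (andP tT).1).
have : (Phi \o w) T <= Phi 0.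
  apply: (fixed_time_bound
    (dh := fun t => dPhi (w t) * (mu^-1 * v t `^ (mu^-1 - 1) * dv t)) T_gt0).
  - move=> t tT; have [Phi_d _ _ _] := w_props t tT.
    exact: is_derive1_comp Phi_d (w_derive t tT).
  - move=> t /andP[t_gt0 tT]; have tT' : 0 < t <= T by rewrite t_gt0 ltW.
    have [_ dPhi_ge0 dPhiQ_ge _] := w_props t tT'.
    have w_decay := powRV_derive_le (v_gt0 t tT') mu_gt0 (v_decay t t_gt0 (v_gt0 t tT')).
    apply: le_trans (ler_wpM2l dPhi_ge0 w_decay) _.
    by rewrite mulrN lerNl opprK mulrA ler_pdivlMr // mul1r.
  - by move=> t tT; have [_ _ _ /andP[]] := w_props t tT.
have T_in : 0 < T <= T by rewrite T_gt0 lexx.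
by have [_ _ _ /andP[Phi_lt _]] := w_props T T_in; rewrite leNgt Phi_lt.
Qed.
End Potential.

Definition quad {R : realType} (a1 a2 d y : R) := a1 * y ^+ 2 - d * y + a2.

Section Quadratic.
Context {R : realType}.

Lemma quad_gt0 (a1 a2 d y : R) : 0 < a1 -> d ^+ 2 < 4 * a1 * a2 -> 0 < quad a1 a2 d y.
Proof.
move=> a1_gt0 disc_lt0.
have : 0 < 4 * a1 * quad a1 a2 d y.
  have -> : 4 * a1 * quad a1 a2 d y = (2 * a1 * y - d) ^+ 2 + (4 * a1 * a2 - d ^+ 2).
    by rewrite /quad; ring.
  by apply: ltr_wpDl; [exact: sqr_ge0 | rewrite subr_gt0].
by rewrite pmulr_rgt0 // mulr_gt0.
Qed.

Lemma quad_le (a1 a2 d1 d y : R) : d1 <= d -> 0 <= y -> quad a1 a2 d y <= quad a1 a2 d1 y.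
Proof. by move=> dd y_ge0; rewrite /quad lerD2r lerD2l lerN2 ler_wpM2r. Qed.

(* At the root w0 the quadratic factors as (w0 - y) (d - a1 y - a1 w0); with
   s = sqrt (a1 a2) and a1 w0 <= s the remainder is nonnegative since s w0 <= s^2 / a1 = a2. *)
Lemma quad_root_bound (a1 a2 d w0 y : R) : 0 < a1 -> 0 < a2 -> quad a1 a2 d w0 = 0 ->
  a1 * w0 <= Num.sqrt (a1 * a2) -> 0 <= y <= w0 ->
  Num.sqrt (a1 * a2) * (w0 - y) ^+ 2 <= w0 * quad a1 a2 d y.
Proof.
move=> a1_gt0 a2_gt0 root w0_le /andP[y_ge0 y_le].
set s := Num.sqrt (a1 * a2) in w0_le *.
have s_sq : s ^+ 2 = a1 * a2 by rewrite sqr_sqrtr // mulr_ge0 ?ltW.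
have sw0_le : s * w0 <= a2.
  rewrite -(ler_pM2l a1_gt0) mulrCA.
  have := ler_wpM2l (sqrtr_ge0 (a1 * a2)) w0_le; rewrite -/s -expr2 s_sq.
  by rewrite [a1 * _]mulrC.
rewrite -subr_ge0.
have -> : w0 * quad a1 a2 d y - s * (w0 - y) ^+ 2 =
    (w0 - y) * (a2 - s * w0 + y * (s - a1 * w0)) + y * quad a1 a2 d w0.
  by rewrite /quad; ring.
rewrite root mulr0 addr0; apply: mulr_ge0; first by rewrite subr_ge0.
by apply: addr_ge0; [rewrite subr_ge0 | apply: mulr_ge0; rewrite ?subr_ge0].
Qed.

Lemma quad_lower_root (a1 a2 d : R) : 0 < a1 -> 0 < a2 -> 2 * Num.sqrt (a1 * a2) <= d ->
  let w0 := (d - Num.sqrt (d ^+ 2 - 4 * a1 * a2)) / (2 * a1) in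
  [/\ 0 < w0, quad a1 a2 d w0 = 0 & a1 * w0 <= Num.sqrt (a1 * a2)].
Proof.
move=> a1_gt0 a2_gt0 d_ge.
set s := Num.sqrt (a1 * a2) in d_ge *; set S := Num.sqrt (d ^+ 2 - _) => w0.
have s_gt0 : 0 < s by rewrite sqrtr_gt0 mulr_gt0.
have s_sq : s ^+ 2 = a1 * a2 by rewrite sqr_sqrtr // mulr_ge0 ?ltW.
have disc : d ^+ 2 - 4 * a1 * a2 = (d - 2 * s) * (d + 2 * s).
  by rewrite -mulrA -s_sq; ring.
have S_sq : S ^+ 2 = d ^+ 2 - 4 * a1 * a2.
  by rewrite sqr_sqrtr // disc mulr_ge0 //; lra.
have S_lt_d : S < d.
  rewrite -(ltr_pXn2r (n := 2)) ?nnegrE ?sqrtr_ge0 //; last by lra.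
  by rewrite S_sq ltrBlDr ltrDl !mulr_gt0.
have a1_neq0 : a1 != 0 by rewrite gt_eqF.
split.
- by rewrite divr_gt0 ?mulr_gt0 // subr_gt0.
- have -> : quad a1 a2 d w0 = (S ^+ 2 - (d ^+ 2 - 4 * a1 * a2)) / (4 * a1).
    by rewrite /quad /w0; field.
  by rewrite S_sq subrr mul0r.
have -> : a1 * w0 = (d - S) / 2 by rewrite /w0; field.
have : d - 2 * s <= S.
  rewrite -[d - 2 * s]ger0_norm ?subr_ge0 // -sqrtr_sqr /S disc.
  by apply: ler_wsqrtr; rewrite expr2 ler_wpM2l ?subr_ge0 //; lra.
lra.
Qed.

Lemma is_derive_atan_quad (a1 a2 d mu y : R) : 0 < a1 -> d ^+ 2 < 4 * a1 * a2 ->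
  let S := Num.sqrt (4 * a1 * a2 - d ^+ 2) in
  is_derive y 1 (fun y => 2 * mu / S * atan ((2 * a1 * y - d) / S)) (mu / quad a1 a2 d y).
Proof.
move=> a1_gt0 disc S.
have S_gt0 : 0 < S by rewrite sqrtr_gt0 subr_gt0.
have S_sq : S ^+ 2 = 4 * a1 * a2 - d ^+ 2 by rewrite sqr_sqrtr // subr_ge0 ltW.
have q_gt0 := quad_gt0 y a1_gt0 disc.
have E : 1 + ((2 * a1 * y - d) / S) ^+ 2 = 4 * a1 * quad a1 a2 d y / S ^+ 2.
  have S2_neq0 : S ^+ 2 != 0 by rewrite expf_neq0 // gt_eqF.
  apply: (mulIf S2_neq0); rewrite divfK //.
  by rewrite mulrDl mul1r -exprMn divfK ?gt_eqF // S_sq /quad; ring.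
apply: is_derive_eq; rewrite scaler0 add0r subr0 E /GRing.scale /= mulr1.
by field; rewrite !gt_eqF.
Qed.
End Quadratic.

Lemma is_derive_div_subr {R : realType} (c w y : R) : y != w ->
  is_derive y 1 (fun y => c / (w - y)) (c / (w - y) ^+ 2).
Proof.
move=> y_neq_w; have wy_neq0 : w - y != 0 by rewrite subr_eq0 eq_sym.
have d_wy : is_derive y 1 (fun y => w - y) (-1) by apply: is_derive_eq; rewrite add0r mul1r.
have := is_deriveV (f := fun y => w - y) wy_neq0 d_wy => d_inv.
by apply: is_derive_eq; rewrite /GRing.scale /= mulrN1 opprK.
Qed.

Section PowR.
Context {R : realType}.

Lemma powRK (mu a : R) : mu != 0 -> 0 <= a -> (a `^ mu) `^ mu^-1 = a.
Proof. by move=> mu_neq0 a_ge0; rewrite -powRrM mulfV // powRr1. Qed.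

Lemma powR_rate_factor (a1 a2 d mu v : R) : 0 < v ->
  - a1 * v `^ (1 + mu^-1) - a2 * v `^ (1 - mu^-1) + d * v =
  - v `^ (1 - mu^-1) * quad a1 a2 d (v `^ mu^-1).
Proof.
move=> v_gt0; have vD r s : v `^ (r + s) = v `^ r * v `^ s.
  by rewrite powRD // (gt_eqF v_gt0) implybT.
have v1 : v = v `^ (1 - mu^-1) * v `^ mu^-1 by rewrite -vD subrK powRr1 // ltW.
have -> : 1 + mu^-1 = (1 - mu^-1) + mu^-1 + mu^-1 by ring.
by rewrite [in d * v]v1 !vD /quad; ring.
Qed.

Lemma powRV_lt (mu y w : R) : 0 < mu -> 0 <= y -> 0 <= w ->
  y < w `^ mu -> y `^ mu^-1 < w.
Proof.
move=> mu_gt0 y_ge0 w_ge0 y_lt; rewrite -[X in _ < X](powRK (lt0r_neq0 mu_gt0) w_ge0).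
by rewrite gt0_ltr_powR ?invr_gt0 ?nnegrE ?powR_ge0.
Qed.

Lemma powRV_le (mu y w : R) : 0 < mu -> 0 <= y -> 0 <= w ->
  y <= w `^ mu -> y `^ mu^-1 <= w.
Proof.
move=> mu_gt0 y_ge0 w_ge0 y_le; rewrite -[X in _ <= X](powRK (lt0r_neq0 mu_gt0) w_ge0).
by apply: ge0_ler_powR; rewrite ?nnegrE ?invr_ge0 ?powR_ge0 ?(ltW mu_gt0).
Qed.
End PowR.

Lemma sqrtr_quarter {R : realType} (a X : R) : 0 < a -> 0 <= X ->
  Num.sqrt (X / (4 * a ^+ 2)) = Num.sqrt X / (2 * a).
Proof.
move=> a_gt0 X_ge0; have -> : X / (4 * a ^+ 2) = X * ((2 * a) ^+ 2)^-1.
  by field; rewrite gt_eqF.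
by rewrite sqrtrM // sqrtrV ?sqr_ge0 // sqrtr_sqr gtr0_norm ?mulr_gt0.
Qed.

Lemma subcritical_time0 {R : realType} (a1 a2 mu : R) : 0 < a1 -> 0 < a2 ->
  let S := Num.sqrt (4 * a1 * a2 - 0 ^+ 2) in
  mu / (a1 * Num.sqrt ((4 * a1 * a2 - 0 ^+ 2) / (4 * a1 ^+ 2))) * (pi / 2 - atan (- 0 / S)) =
  mu * pi / (2 * Num.sqrt (a1 * a2)).
Proof.
move=> a1_gt0 a2_gt0 S; rewrite oppr0 mul0r atan0 subr0 expr0n subr0.
have -> : 4 * a1 * a2 = 2 ^+ 2 * (a1 * a2) by ring.
rewrite sqrtr_quarter ?mulr_ge0 ?ltW // sqrtrM ?sqr_ge0 // sqrtr_sqr gtr0_norm //.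
by field; rewrite !gt_eqF ?sqrtr_gt0 ?mulr_gt0.
Qed.

Section FixedTimeDecay.
Context {R : realType}.
Variables (v dv : R -> R) (a1 a2 d1 mu : R).
Implicit Types (t u T : R).
Hypotheses (a1_gt0 : 0 < a1) (a2_gt0 : 0 < a2) (mu_gt1 : 1 < mu).
Hypothesis v_ge0 : forall t, 0 <= v t.
Hypothesis v_cont : {within `[0, +oo[, continuous v}.
Hypothesis v_derive : forall t, 0 < t -> is_derive t 1 v (dv t).
Hypothesis v_decay : forall t, 0 < t -> 0 < v t ->
  dv t <= - v t `^ (1 - mu^-1) * quad a1 a2 d1 (v t `^ mu^-1).

Let mu_gt0 : 0 < mu. Proof. by apply: lt_trans mu_gt1. Qed.

Lemma decay_le0 t : 0 < t -> (0 < v t -> 0 <= quad a1 a2 d1 (v t `^ mu^-1)) -> dv t <= 0.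
Proof.
move=> t_gt0 quad_ge0; have [vt_gt0|] := ltP 0 (v t).
  apply: le_trans (v_decay t_gt0 vt_gt0) _.
  by rewrite mulNr oppr_le0 mulr_ge0 ?powR_ge0 ?quad_ge0.
rewrite le_eqVlt ltNge v_ge0 orbF => /eqP vt0.
have t_min : is_derive t 1 v 0.
  apply: (@derive1_at_min _ _ 0 (2 * t)); rewrite ?in_itv /=.
  - by rewrite mulr_ge0 // ltW.
  - by move=> u /andP[u_gt0 _]; have [] := v_derive u_gt0.
  - by rewrite t_gt0 /=; lra.
  - by move=> u _; rewrite vt0 v_ge0.
by have [_ <-] := v_derive t_gt0; have [_ ->] := t_min.
Qed.

Lemma vanish_after T : (forall t, 0 < t -> dv t <= 0) ->
  ~ (forall t, 0 < t <= T -> 0 < v t) -> forall t, T <= t -> v t = 0.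
Proof.
move=> dv_le0 not_pos t Tt.
have [t1 /andP[t1_gt0 t1T] vt1] : exists2 t1, 0 < t1 <= T & v t1 <= 0.
  apply: contrapT => no_t1; apply: not_pos => u uT; rewrite ltNge; apply/negP => vu.
  by apply: no_t1; exists u.
have t1t : t1 <= t by apply: le_trans Tt.
have : v t <= v t1.
  apply: (derive_le0_nonincr (b := t) v_cont v_derive) => //.
  - by move=> u /andP[u_gt0 _]; exact: dv_le0.
  - by rewrite in_itv /= lexx (le_trans (ltW t1_gt0)).
  - by rewrite in_itv /= ltW.
by move/le_trans/(_ vt1) => vt_le0; apply/eqP; rewrite eq_le vt_le0 v_ge0.
Qed.

Lemma subcritical_vanish d : d1 <= d -> 0 <= d < 2 * Num.sqrt (a1 * a2) ->
  let S := Num.sqrt (4 * a1 * a2 - d ^+ 2) in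
  let k1 := Num.sqrt ((4 * a1 * a2 - d ^+ 2) / (4 * a1 ^+ 2)) in
  forall t, mu / (a1 * k1) * (pi / 2 - atan (- d / S)) <= t -> v t = 0.
Proof.
move=> d1_le /andP[d_ge0 d_lt] S k1.
have disc : d ^+ 2 < 4 * a1 * a2.
  have -> : 4 * a1 * a2 = (2 * Num.sqrt (a1 * a2)) ^+ 2.
    by rewrite exprMn sqr_sqrtr ?mulr_ge0 ?ltW //; ring.
  by rewrite ltr_pXn2r ?nnegrE ?mulr_ge0 ?sqrtr_ge0.
have S_gt0 : 0 < S by rewrite sqrtr_gt0 subr_gt0.
have -> : mu / (a1 * k1) = 2 * mu / S.
  rewrite /k1 sqrtr_quarter -/S //; last by rewrite subr_ge0 ltW.
  by field; rewrite !gt_eqF.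
set K := 2 * mu / S.
have K_gt0 : 0 < K by rewrite divr_gt0 ?mulr_gt0.
pose Phi y := K * atan ((2 * a1 * y - d) / S).
have Phi0 : Phi 0 = K * atan (- d / S) by rewrite /Phi mulr0 sub0r.
apply: vanish_after.
  move=> t t_gt0; apply: decay_le0 => // _.
  exact: le_trans (ltW (quad_gt0 _ a1_gt0 disc)) (quad_le _ _ d1_le (powR_ge0 _ _)).
apply: (potential_settling (Phi := Phi) (dPhi := fun y => mu / quad a1 a2 d y)
  (Y := setT) mu_gt0 _ v_derive v_decay) => //.
  by rewrite mulr_gt0 // subr_gt0 atan_ltpi2.
move=> y y_gt0 _; have q_gt0 := quad_gt0 y a1_gt0 disc.
split; first exact: is_derive_atan_quad.
- by rewrite ltW ?divr_gt0.
- by rewrite mulrAC ler_pdivlMr // ler_pM2l // quad_le // ltW.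
- rewrite Phi0 /Phi ltr_pM2l // -mulrDr ler_pM2l // subrKC ltW ?atan_ltpi2 //.
  rewrite andbT lt_atan // ltr_pM2r ?invr_gt0 //.
  have : 0 < 2 * a1 * y by rewrite !mulr_gt0.
  lra.
Qed.

Section Supercritical.
Variables (w0 k : R).
Hypotheses (w0_gt0 : 0 < w0) (w0_root : quad a1 a2 d1 w0 = 0).
Hypothesis w0_le : a1 * w0 <= Num.sqrt (a1 * a2).
Hypotheses (k_gt0 : 0 < k) (k_lt1 : k < 1).
Hypothesis v0_le : v 0 <= k `^ mu * w0 `^ mu.

Let kw0_ge0 : 0 <= k * w0. Proof. by rewrite mulr_ge0 ?ltW. Qed.
Let kw0_lt : k * w0 < w0. Proof. by rewrite gtr_pMl. Qed.
Let c_pow : k `^ mu * w0 `^ mu = (k * w0) `^ mu. Proof. by rewrite powRM ?ltW. Qed.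

Let c_lt : k `^ mu * w0 `^ mu < w0 `^ mu.
Proof. by rewrite c_pow; apply: (gt0_ltr_powR mu_gt0); rewrite ?nnegrE // ltW. Qed.

Let decay_le0_below t : 0 < t -> v t < w0 `^ mu -> dv t <= 0.
Proof.
move=> t_gt0 vt_lt; apply: decay_le0 => // _.
have w_ge0 := powR_ge0 (v t) mu^-1.
have w_le : v t `^ mu^-1 <= w0 by apply/ltW/powRV_lt; rewrite ?v_ge0 ?ltW.
rewrite -(pmulr_rge0 _ w0_gt0).
apply: le_trans (quad_root_bound a1_gt0 a2_gt0 w0_root w0_le _); last by rewrite w_ge0.
by rewrite mulr_ge0 ?sqr_ge0 ?sqrtr_ge0.
Qed.

Lemma supercritical_invariant t : 0 <= t -> v t <= k `^ mu * w0 `^ mu.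
Proof. exact: (sublevel_invariant v_cont v_derive decay_le0_below v0_le c_lt). Qed.

Lemma supercritical_vanish t : mu * k / ((1 - k) * Num.sqrt (a1 * a2)) <= t -> v t = 0.
Proof.
set s := Num.sqrt (a1 * a2).
have s_gt0 : 0 < s by rewrite sqrtr_gt0 mulr_gt0.
have k1_gt0 : 0 < 1 - k by rewrite subr_gt0.
pose C := mu * w0 / s; have C_gt0 : 0 < C by rewrite !divr_gt0 ?mulr_gt0.
apply: vanish_after => [u u_gt0|]; first apply: decay_le0_below => //.
  exact: le_lt_trans (supercritical_invariant (ltW u_gt0)) c_lt.
apply: (potential_settling (Phi := fun y => C / (w0 - y)) (dPhi := fun y => C / (w0 - y) ^+ 2)
  (Y := [set y | y <= k * w0]) mu_gt0 _ v_derive v_decay).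
- by rewrite !divr_gt0 ?mulr_gt0.
- move=> y y_gt0 /= y_le; have w0y : 0 < w0 - y by rewrite subr_gt0 (le_lt_trans y_le).
  split.
  + by apply: is_derive_div_subr; rewrite lt_eqF // (le_lt_trans y_le).
  + by rewrite ltW // divr_gt0 ?exprn_gt0.
  + have -> : C / (w0 - y) ^+ 2 * quad a1 a2 d1 y =
        mu * (w0 * quad a1 a2 d1 y / (s * (w0 - y) ^+ 2)).
      by rewrite /C; field; rewrite !gt_eqF.
    rewrite ler_peMr ?(ltW mu_gt0) // ler_pdivlMr ?mulr_gt0 ?exprn_gt0 // mul1r.
    by apply: quad_root_bound; rewrite // ltW //= ltW // (le_lt_trans y_le).
  + have -> : C / (w0 - 0) + mu * k / ((1 - k) * s) = C / ((1 - k) * w0).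
      by rewrite /C subr0; field; rewrite !gt_eqF.
    rewrite subr0 ltr_pM2l // ler_pM2l // ltf_pV2 ?lef_pV2 ?posrE ?mulr_gt0 //.
    by apply/andP; split; lra.
- move=> u /andP[u_gt0 _] /=; apply: powRV_le; rewrite ?v_ge0 // -c_pow.
  exact: supercritical_invariant (ltW u_gt0).
Qed.
End Supercritical.
End FixedTimeDecay.

Section Lyapunov.
Context {R : realType} {n : nat}.
Variables (f : 'rV[R]_n -> 'rV[R]_n) (V : 'rV[R]_n -> R).
Hypothesis V_diff : forall y, differentiable V y.

Lemma lyapunov_derive x0 (x : R -> 'rV[R]_n) (t : R) : is_solution f x0 x -> 0 < t ->
  is_derive t 1 (V \o x) ('d V (x t) (f (x t))).
Proof.
move=> [_ [_ x_derive]] /x_derive [/derivable1_diffP x_diff x_val].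
have Vx_diff : differentiable (V \o x) t by exact: differentiable_comp.
split; first exact/derivable1_diffP.
by rewrite deriveE // diff_comp //= -(deriveE _ x_diff) x_val.
Qed.

Lemma lyapunov_continuous x0 (x : R -> 'rV[R]_n) : is_solution f x0 x ->
  {within `[0, +oo[, continuous (V \o x)}.
Proof.
move=> [_ [x_cont x_derive]]; have [_ x_right] := (continuous_within_itvcyP 0 x).1 x_cont.
apply/continuous_within_itvcyP; split.
  move=> t; rewrite in_itv /= andbT => /x_derive [/derivable1_diffP x_diff _].
  exact: differentiable_continuous (differentiable_comp x_diff (V_diff _)).
exact: cvg_comp x_right (differentiable_continuous (V_diff (x 0))).
Qed.

Section Settling.
Variables (a1 a2 d1 mu : R).
Hypotheses (a1_gt0 : 0 < a1) (a2_gt0 : 0 < a2) (mu_gt1 : 1 < mu).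
Hypothesis V_posdef : positive_definite V.
Hypothesis V_decay : forall y, y != 0 ->
  'd V y (f y) <= - a1 * V y `^ (1 + mu^-1) - a2 * V y `^ (1 - mu^-1) + d1 * V y.
Variables (x0 : 'rV[R]_n) (x : R -> 'rV[R]_n).
Hypothesis x_sol : is_solution f x0 x.

Let v_ge0 (t : R) : 0 <= (V \o x) t.
Proof.
have [V0 V_gt0] := V_posdef.
by have [/= ->|/V_gt0/ltW //] := eqVneq (x t) 0; rewrite V0.
Qed.

Let v_cont := lyapunov_continuous x_sol.
Let v_derive (t : R) := @lyapunov_derive x0 x t x_sol.

Let v_decay (t : R) : 0 < t -> 0 < (V \o x) t ->
  'd V (x t) (f (x t)) <= - V (x t) `^ (1 - mu^-1) * quad a1 a2 d1 (V (x t) `^ mu^-1).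
Proof.
move=> _ Vx_gt0; rewrite -powR_rate_factor //; apply: V_decay.
by apply: contraTneq Vx_gt0 => /= ->; rewrite V_posdef.1 ltxx.
Qed.

Let settles T : (forall t, T <= t -> V (x t) = 0) -> settles_by x T.
Proof.
move=> V_x t /V_x Vxt; apply/eqP; apply: contraTT isT => /V_posdef.2.
by rewrite Vxt ltxx.
Qed.

Lemma solution_settles_subcritical d : d1 <= d -> 0 <= d < 2 * Num.sqrt (a1 * a2) ->
  settles_by x (mu / (a1 * Num.sqrt ((4 * a1 * a2 - d ^+ 2) / (4 * a1 ^+ 2))) *
    (pi / 2 - atan (- d / Num.sqrt (4 * a1 * a2 - d ^+ 2)))).
Proof.
move=> d1_le d_in; apply: settles.
exact: subcritical_vanish a1_gt0 a2_gt0 mu_gt1 v_ge0 v_cont v_derive v_decay d d1_le d_in.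
Qed.

Section Supercritical.
Variables (w0 k : R).
Hypotheses (w0_gt0 : 0 < w0) (w0_root : quad a1 a2 d1 w0 = 0).
Hypothesis w0_le : a1 * w0 <= Num.sqrt (a1 * a2).
Hypotheses (k_gt0 : 0 < k) (k_lt1 : k < 1).
Hypothesis x0_le : V x0 <= k `^ mu * w0 `^ mu.

Let v0_le : (V \o x) 0 <= k `^ mu * w0 `^ mu. Proof. by rewrite /= x_sol.1. Qed.

Lemma solution_sublevel_invariant t : 0 <= t -> V (x t) <= k `^ mu * w0 `^ mu.
Proof.
exact: (supercritical_invariant a1_gt0 a2_gt0 mu_gt1 v_ge0 v_cont v_derive v_decay
  w0_gt0 w0_root w0_le k_gt0 k_lt1 v0_le (t := t)).
Qed.

Lemma solution_settles_supercritical :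
  settles_by x (mu * k / ((1 - k) * Num.sqrt (a1 * a2))).
Proof.
apply: settles => t.
exact: (supercritical_vanish a1_gt0 a2_gt0 mu_gt1 v_ge0 v_cont v_derive v_decay
  w0_gt0 w0_root w0_le k_gt0 k_lt1 v0_le (t := t)).
Qed.
End Supercritical.
End Settling.
End Lyapunov.

Lemma nbhs_sublevel {R : realType} (T : topologicalType) (g : T -> R) (x : T) (c : R) :
  {for x, continuous g} -> g x < c -> nbhs x [set y | g y <= c].
Proof.
by move=> g_cont gx_lt; apply: filterS (cvgr_lt _ g_cont _ gx_lt) => y /ltW.
Qed.

Theorem theorem1 (R : realType) (n : nat) (f : 'rV[R]_n -> 'rV[R]_n)
  (V : 'rV[R]_n -> R) (alpha1 alpha2 delta1 mu k : R)
  (hf : continuous f) (hf0 : f 0 = 0)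
  (hex : forall x0, exists x, is_solution f x0 x)
  (huniq : forall x0 x y, is_solution f x0 x -> is_solution f x0 y ->
     forall t, 0 <= t -> x t = y t)
  (hV : C1 V) (hpd : positive_definite V) (hproper : proper_fun V)
  (ha1 : 0 < alpha1) (ha2 : 0 < alpha2) (hmu : 1 < mu)
  (hk0 : 0 < k) (hk1 : k < 1)
  (hdV : forall x, x != 0 ->
     'd V x (f x) <= - alpha1 * powR (V x) (1 + mu^-1)
                     - alpha2 * powR (V x) (1 - mu^-1) + delta1 * V x) :
  let r := delta1 / (2 * Num.sqrt (alpha1 * alpha2)) in
  let k1 := Num.sqrt ((4 * alpha1 * alpha2 - delta1 ^+ 2) / (4 * alpha1 ^+ 2)) in
  let k2 := - delta1 / Num.sqrt (4 * alpha1 * alpha2 - delta1 ^+ 2) in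
  let D : set 'rV[R]_n :=
    if r < 1 then setT
    else [set x | V x <= powR k mu *
           powR ((delta1 - Num.sqrt (delta1 ^+ 2 - 4 * alpha1 * alpha2)) / (2 * alpha1)) mu] in
  nbhs (0 : 'rV[R]_n) D /\
  forall x0 x, D x0 -> is_solution f x0 x ->
    (forall t, 0 <= t -> D (x t)) /\
    (r <= 0 -> settles_by x (mu * pi / (2 * Num.sqrt (alpha1 * alpha2)))) /\
    (0 <= r < 1 -> settles_by x (mu / (alpha1 * k1) * (pi / 2 - atan k2))) /\
    (1 <= r -> settles_by x (mu * k / ((1 - k) * Num.sqrt (alpha1 * alpha2)))).
Proof.
move=> r k1 k2 D.
have [V_diff _] := hV.
have s2_gt0 : 0 < 2 * Num.sqrt (alpha1 * alpha2) by rewrite mulr_gt0 // sqrtr_gt0 mulr_gt0.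
have r_lt1E : (r < 1) = (delta1 < 2 * Num.sqrt (alpha1 * alpha2)).
  by rewrite /r ltr_pdivrMr // [1 * _]mul1r.
have d_ge : ~~ (r < 1) -> 2 * Num.sqrt (alpha1 * alpha2) <= delta1 by rewrite leNgt -r_lt1E.
split.
  rewrite /D; case: ifPn => [_|/d_ge/(quad_lower_root ha1 ha2)[w0_gt0 _ _]].
    exact: filterT.
  apply: nbhs_sublevel; first exact: differentiable_continuous (V_diff 0).
  by rewrite hpd.1 mulr_gt0 ?powR_gt0.
move=> x0 x Dx0 sol; rewrite /D in Dx0 *; case: ifPn Dx0 => [r_lt1 _ | r_ge1 Vx0].
  have sub := solution_settles_subcritical V_diff ha1 ha2 hmu hpd hdV sol.
  split => //; split; [|split]; last by rewrite leNgt r_lt1.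
    rewrite /r pmulr_lle0 ?invr_gt0 // => d_le0.
    by rewrite -subcritical_time0 //; apply: sub; rewrite ?lexx.
  rewrite /r andbT pmulr_lge0 ?invr_gt0 // => d_ge0.
  by apply: sub; rewrite ?lexx // d_ge0 -r_lt1E.
have [w0_gt0 w0_root w0_le] := quad_lower_root ha1 ha2 (d_ge r_ge1).
have inv := solution_sublevel_invariant V_diff ha1 ha2 hmu hpd hdV sol
  w0_gt0 w0_root w0_le hk0 hk1 Vx0.
have settle := solution_settles_supercritical V_diff ha1 ha2 hmu hpd hdV sol
  w0_gt0 w0_root w0_le hk0 hk1 Vx0.
split; first by move=> t /inv.
split; [|split]; last by move=> _.
  by move: r_ge1; rewrite -leNgt => /le_trans/[apply]; rewrite ler10.
by rewrite andbF.
Qed.
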